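(* In the Byblos protocol described in the context, if a transaction is assigned timestamp $t$, then for every integer $t'$ with $0<t'<t$, some transaction is assigned timestamp $t'$.
   Context: Byblos timestamping. There are $n=4f+1$ servers, at most $f$ of which are Byzantine; the rest are correct. Clients are not Byzantine (they may crash). Messages between correct parties are eventually delivered, channels are FIFO, senders are authenticated, and client messages are signed and unforgeable. Each correct server keeps an integer $\mathit{clock}$, initially $0$. Client with transaction $T$: broadcasts $\mathrm{Propose}(T)$ to all servers; waits for $\mathrm{ProposeAck}(T,\cdot)$ responses from at least $n-f$ servers; letting $\mathit{timestamp}[s]$ be the value received from server $s$ ($0$ if none), sets $\hat t$ to $1$ plus the $(f+1)$-st largest value of $\mathit{timestamp}[\cdot]$; then broadcasts $\mathrm{Confirm}(T,\hat t)$. Correct server: on $\mathrm{Propose}(T)$ from a client, replies $\mathrm{ProposeAck}(T,\mathit{clock})$ with its current clock (and forwards the proposal with that clock value to the other servers); on receiving $\mathrm{Confirm}(T,\hat t)$ from a client or forwarded by a server, sets $\mathit{clock}:=\max(\mathit{clock},\hat t)$ and forwards $\mathrm{Confirm}(T,\hat t)$ to all servers if not previously done. The clock changes only in this way. A transaction $T$ is \emph{assigned timestamp} $t$ if some correct server received a $\mathrm{Confirm}(T,t)$ message from a client. *)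

From Stdlib Require Import List.
From mathcomp Require Import all_boot.
Set Implicit Arguments. Unset Strict Implicit. Unset Printing Implicit Defensive.

Section Byblos.
(* f = bound on Byzantine servers; there are n = 4f+1 servers 'I_(4*f+1). *)
Variable f : nat.
Local Notation n := (4 * f + 1).
Local Notation srv := 'I_(4 * f + 1).
Variables (Cl Tx : eqType).

Inductive party := Srv of srv | Cli of Cl.

(* Messages.  Propose and Confirm are signed by the issuing client c
   (the client identity is part of the signed content). *)
Inductive msg :=
| Propose of Cl & Tx
| ProposeAck of Tx & nat
| FwdPropose of Cl & Tx & nat
| Confirm of Cl & Tx & nat.

(* Client-signed contents produced so far (unforgeability). *)
Inductive sigc := SigProp of Cl & Tx | SigConf of Cl & Tx & nat.

Inductive cphase :=
| CIdle
  (* broadcasting Propose (sent = servers already sent to) and collecting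
     the first ProposeAck value received from each server *)
| CWait of (srv -> bool) & (srv -> option nat)
  (* broadcasting Confirm(T, t) (sent = servers already sent to) *)
| CConf of nat & (srv -> bool).

Record state := State {
  net  : list (party * party * msg);   (* in-flight messages, in sending order *)
  dlv  : list (party * party * msg);   (* log of delivered messages (src,dst,m) *)
  sigs : list sigc;
  clk  : srv -> nat;
  fwd  : srv -> list (Cl * Tx * nat);  (* Confirms already forwarded *)
  cph  : Cl -> Tx -> cphase }.

Definition init : state :=
  State nil nil nil (fun _ => 0) (fun _ => nil) (fun _ _ => CIdle).

Definition upd_srv {X} (g : srv -> X) (j : srv) (x : X) : srv -> X :=
  fun k => if k == j then x else g k.
Definition upd_cph (g : Cl -> Tx -> cphase) (c : Cl) (T : Tx) (p : cphase) :=
  fun c' T' => if (c' == c) && (T' == T) then p else g c' T'.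

Definition set_net s l := State l (dlv s) (sigs s) (clk s) (fwd s) (cph s).
Definition set_cph s g := State (net s) (dlv s) (sigs s) (clk s) (fwd s) g.

(* Timestamp computed by a client from the first acks received:
   1 + the (f+1)-st largest of timestamp[.] (0 for servers with no ack). *)
Definition client_ts (acks : srv -> option nat) : nat :=
  (nth 0 (sort geq [seq odflt 0 (acks j) | j <- enum 'I_n]) f).+1.

Definition all_servers (src : party) (m : msg) : list (party * party * msg) :=
  [seq (src, Srv k, m) | k <- enum 'I_n].

Variable B : {set srv}.   (* Byzantine servers *)

(* Effect of delivering message m from src to dst (s has m already removed). *)
Inductive recv (s : state) : party -> party -> msg -> state -> Prop :=
| recv_byz src j m : j \in B -> recv s src (Srv j) m s
| recv_propose c T j : j \notin B ->
    recv s (Cli c) (Srv j) (Propose c T)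
      (set_net s (net s ++ (Srv j, Cli c, ProposeAck T (clk s j))
                  :: [seq (Srv j, Srv k, FwdPropose c T (clk s j))
                     | k <- enum 'I_n & k != j]))
| recv_confirm_new src c T t j : j \notin B -> ~ In (c, T, t) (fwd s j) ->
    recv s src (Srv j) (Confirm c T t)
      (State (net s ++ all_servers (Srv j) (Confirm c T t)) (dlv s) (sigs s)
             (upd_srv (clk s) j (maxn (clk s j) t))
             (upd_srv (fwd s) j ((c, T, t) :: fwd s j)) (cph s))
| recv_confirm_old src c T t j : j \notin B -> In (c, T, t) (fwd s j) ->
    recv s src (Srv j) (Confirm c T t)
      (State (net s) (dlv s) (sigs s)
             (upd_srv (clk s) j (maxn (clk s j) t)) (fwd s) (cph s))
| recv_srv_ignore src j m : j \notin B ->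
    (forall c T, m = Propose c T -> src <> Cli c) ->
    (forall c T t, m <> Confirm c T t) ->
    recv s src (Srv j) m s
| recv_ack c T k j sent acks :
    cph s c T = CWait sent acks -> acks j = None ->
    recv s (Srv j) (Cli c) (ProposeAck T k)
      (set_cph s (upd_cph (cph s) c T (CWait sent (upd_srv acks j (Some k)))))
| recv_cli_ignore src c m :
    (forall T k j sent acks, m = ProposeAck T k -> src = Srv j ->
       cph s c T = CWait sent acks -> acks j <> None) ->
    recv s src (Cli c) m s.

(* Messages a Byzantine server may send: anything, except that it cannot
   forge client-signed contents. *)
Definition byz_ok (s : state) (m : msg) : Prop :=
  match m with
  | Propose c T => In (SigProp c T) (sigs s)
  | FwdPropose c T _ => In (SigProp c T) (sigs s)
  | Confirm c T t => In (SigConf c T t) (sigs s)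
  | ProposeAck _ _ => True
  end.

Inductive step (s : state) : state -> Prop :=
| st_propose c T : cph s c T = CIdle ->
    step s (State (net s) (dlv s) (SigProp c T :: sigs s) (clk s) (fwd s)
             (upd_cph (cph s) c T (CWait (fun _ => false) (fun _ => None))))
| st_send_prop c T j sent acks : cph s c T = CWait sent acks -> sent j = false ->
    step s (State (net s ++ (Cli c, Srv j, Propose c T) :: nil) (dlv s) (sigs s)
             (clk s) (fwd s)
             (upd_cph (cph s) c T (CWait (upd_srv sent j true) acks)))
| st_decide c T sent acks : cph s c T = CWait sent acks ->
    (forall j, sent j) -> n - f <= #|[pred j | isSome (acks j)]| ->
    step s (State (net s) (dlv s) (SigConf c T (client_ts acks) :: sigs s)
             (clk s) (fwd s)
             (upd_cph (cph s) c T (CConf (client_ts acks) (fun _ => false))))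
| st_send_conf c T t j sent : cph s c T = CConf t sent -> sent j = false ->
    step s (State (net s ++ (Cli c, Srv j, Confirm c T t) :: nil) (dlv s) (sigs s)
             (clk s) (fwd s) (upd_cph (cph s) c T (CConf t (upd_srv sent j true))))
| st_deliver pre post src dst m s' :
    net s = pre ++ (src, dst, m) :: post ->
    Forall (fun e : party * party * msg => (e.1.1, e.1.2) <> (src, dst)) pre ->
    recv (State (pre ++ post) ((src, dst, m) :: dlv s) (sigs s) (clk s)
            (fwd s) (cph s)) src dst m s' ->
    step s s'
| st_byz j dst m : j \in B -> byz_ok s m ->
    step s (set_net s (net s ++ (Srv j, dst, m) :: nil)).

Inductive reachable : state -> Prop :=
| reach_init : reachable init
| reach_step s s' : reachable s -> step s s' -> reachable s'.

Definition assigned (s : state) (T : Tx) (t : nat) : Prop :=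
  exists c src j, j \notin B /\ In (src, Srv j, Confirm c T t) (dlv s).

End Byblos.

From mathcomp Require Import all_boot.
From Stdlib Require Import List (In, in_app_iff, in_map_iff, in_or_app).

(* Invariant: every timestamp t carried by a Confirm message, a client signature or a
   client's decision has all of 1 .. t-1 assigned, and every clock or ack value k of a
   correct server has all of 1 .. k assigned.  Correct clocks only rise to values t of
   delivered Confirms, and t is then assigned itself.  A client picks 1 + the (f+1)-st
   largest ack; as at most f servers are Byzantine, that ack is at most some correct
   server's ack. *)

Set Implicit Arguments.
Unset Strict Implicit.
Unset Printing Implicit Defensive.

Lemma count_ge_nth_sort (s : seq nat) k :
  k < size s -> k < count (leq (nth 0 (sort geq s) k)) s.
Proof.
move=> lt_k_s; rewrite -(count_sort geq); set x := nth 0 _ k; set ss := sort geq s.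
have sorted_ss : sorted geq ss by apply: sort_sorted => a b; exact: leq_total.
have size_ss : size ss = size s by rewrite size_sort.
have size_take_ss : size (take k.+1 ss) = k.+1 by rewrite size_takel ?size_ss.
have : all (leq x) (take k.+1 ss).
  apply/(all_nthP 0) => i; rewrite size_take_ss => lt_i_k.
  rewrite nth_take //; apply: (sorted_leq_nth (leT := geq)) => //=.
  - by move=> a b c ba cb; exact: leq_trans cb ba.
  - exact: leqnn.
  - by rewrite -topredE /= size_ss (leq_trans lt_i_k).
  - by rewrite -topredE /= size_ss.
rewrite all_count size_take_ss => /eqP count_take.
by rewrite -(cat_take_drop k.+1 ss) count_cat count_take leq_addr.
Qed.

Lemma nth_sort_geq_le_outside (I : finType) (A : {pred I}) (v : I -> nat) k :
  #|A| <= k < #|I| ->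
  exists2 i, i \notin A & nth 0 (sort geq [seq v i | i <- enum I]) k <= v i.
Proof.
case/andP=> le_A_k lt_k_I; set x := nth 0 _ k.
have [/existsP[i /andP[iA le_x_vi]] | /existsPn no_i] :=
  boolP [exists i, (i \notin A) && (x <= v i)]; first by exists i.
have le_count_A : count (fun i => x <= v i) (enum I) <= #|A|.
  rewrite enumT cardE /enum_mem size_filter; apply: sub_count => i le_x_vi.
  by apply/negPn/negP => iA; have := no_i i; rewrite iA le_x_vi.
have := @count_ge_nth_sort [seq v i | i <- enum I] k.
rewrite size_map -cardT count_map => /(_ lt_k_I) lt_k_count.
by have := leq_trans lt_k_count (leq_trans le_count_A le_A_k); rewrite ltnn.
Qed.

Lemma in_app_mid (A : Type) (l m r : seq A) x :
  In x ((l ++ m) ++ r) -> In x (l ++ r) \/ In x m.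
Proof. by rewrite !in_app_iff; tauto. Qed.

Section Invariant.

Variables (f : nat) (Cl Tx : eqType) (B : {set 'I_(4 * f + 1)}).

Local Notation state := (state f Cl Tx).
Local Notation packet := (party f Cl * party f Cl * msg Cl Tx)%type.

Definition assigned_below (s : state) (t : nat) : Prop :=
  forall t', 0 < t' < t -> exists T, assigned B s T t'.

Definition sound_msg (s : state) (e : packet) : Prop :=
  let: (src, _, m) := e in
  match m with
  | Confirm _ _ t => assigned_below s t
  | ProposeAck _ k => if src is Srv j then j \notin B -> assigned_below s k.+1 else True
  | _ => True
  end.

Definition sound_sig (s : state) (sg : sigc Cl Tx) : Prop :=
  if sg is SigConf _ _ t then assigned_below s t else True.

Definition sound_phase (s : state) (p : cphase f) : Prop :=
  match p with
  | CIdle => True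
  | CWait _ acks => forall j k, j \notin B -> acks j = Some k -> assigned_below s k.+1
  | CConf t _ => assigned_below s t
  end.

Record invariant (s : state) : Prop := {
  sent_sound : forall e, In e (net s ++ dlv s) -> sound_msg s e;
  sigs_sound : forall sg, In sg (sigs s) -> sound_sig s sg;
  clk_sound : forall j, j \notin B -> assigned_below s (clk s j).+1;
  cph_sound : forall c T, sound_phase s (cph s c T) }.

Section Monotonicity.

Variables s s' : state.
Hypothesis dlv_sub : forall e, In e (dlv s) -> In e (dlv s').

Lemma assigned_below_dlv t : assigned_below s t -> assigned_below s' t.
Proof.
move=> below_t t' lt_t'; have [T [c [src [j [jB dlv_j]]]]] := below_t t' lt_t'.
by exists T, c, src, j; split; last exact: dlv_sub.
Qed.

Lemma sound_msg_dlv e : sound_msg s e -> sound_msg s' e.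
Proof.
case: e => [[[j|c] dst] [c' T|T k|c' T k|c' T t]] //=; try exact: assigned_below_dlv.
by move=> below_k /below_k /assigned_below_dlv.
Qed.

Lemma sound_sig_dlv sg : sound_sig s sg -> sound_sig s' sg.
Proof. by case: sg => //= *; exact: assigned_below_dlv. Qed.

Lemma sound_phase_dlv p : sound_phase s p -> sound_phase s' p.
Proof.
case: p => //= [sent acks sound_acks j k jB /(sound_acks j k jB)|t sent].
  exact: assigned_below_dlv.
exact: assigned_below_dlv.
Qed.

End Monotonicity.

Lemma assigned_below1 s : assigned_below s 1.
Proof. by case=> [|[]]. Qed.

Lemma assigned_below_le s t1 t2 :
  t1 <= t2 -> assigned_below s t2 -> assigned_below s t1.
Proof.
move=> le_t1_t2 below_t2 t' /andP[t'_gt0 lt_t'_t1]; apply: below_t2.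
by rewrite t'_gt0 (leq_trans lt_t'_t1).
Qed.

Lemma assigned_below_succ s T t :
  assigned B s T t -> assigned_below s t -> assigned_below s t.+1.
Proof.
move=> assigned_t below_t t' /andP[t'_gt0]; rewrite ltnS leq_eqVlt.
case/orP=> [/eqP -> | lt_t'_t]; first by exists T.
by apply: below_t; rewrite t'_gt0.
Qed.

Lemma assigned_below_maxn s t1 t2 :
  assigned_below s t1 -> assigned_below s t2 -> assigned_below s (maxn t1 t2).
Proof. by move=> below_t1 below_t2; case: leqP. Qed.

Lemma invariant_init : invariant (init f Cl Tx).
Proof. by split=> //= *; exact: assigned_below1. Qed.

Lemma invariant_send s new :
  invariant s -> (forall e, In e new -> sound_msg s e) ->
  invariant (set_net s (net s ++ new)).
Proof.
case=> sent_ok sigs_ok clk_ok cph_ok new_ok.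
by split=> //= e /(@in_app_mid _ (net s)) [/sent_ok | /new_ok].
Qed.

Definition sign (s : state) (sg : sigc Cl Tx) : state :=
  State (net s) (dlv s) (sg :: sigs s) (clk s) (fwd s) (cph s).

Lemma invariant_sign s sg : invariant s -> sound_sig s sg -> invariant (sign s sg).
Proof. by case=> sent_ok sigs_ok clk_ok cph_ok sg_ok; split=> //= sg' [<- | /sigs_ok]. Qed.

Lemma invariant_upd_cph s c T p :
  invariant s -> sound_phase s p -> invariant (set_cph s (upd_cph (cph s) c T p)).
Proof.
case=> sent_ok sigs_ok clk_ok cph_ok p_ok; split=> //= c' T'.
by rewrite /upd_cph; case: ifP => _; [exact: p_ok | exact: cph_ok].
Qed.

Lemma invariant_raise_clk s j t fw :
  invariant s -> assigned_below s t.+1 ->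
  invariant (State (net s) (dlv s) (sigs s) (upd_srv (clk s) j (maxn (clk s j) t))
                   fw (cph s)).
Proof.
case=> sent_ok sigs_ok clk_ok cph_ok below_t; split=> //= j' j'B.
rewrite /upd_srv; case: eqP => [<- | _]; last exact: clk_ok.
by rewrite -maxnSS; apply: assigned_below_maxn => //; apply: clk_ok.
Qed.

Lemma invariant_take s pre e post :
  invariant s -> net s = pre ++ e :: post ->
  invariant (State (pre ++ post) (e :: dlv s) (sigs s) (clk s) (fwd s) (cph s)).
Proof.
case=> sent_ok sigs_ok clk_ok cph_ok net_s.
set s' := State _ _ _ _ _ _.
have dlv_sub x : In x (dlv s) -> In x (dlv s') by right.
split=> /=.
- move=> x sent_x; apply: (sound_msg_dlv dlv_sub); apply: sent_ok.
  by move: sent_x; rewrite net_s !in_app_iff /=; tauto.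
- by move=> sg /sigs_ok; apply: (sound_sig_dlv dlv_sub).
- by move=> j /clk_ok; apply: (assigned_below_dlv dlv_sub).
- by move=> c T; apply: (sound_phase_dlv dlv_sub).
Qed.

Hypothesis le_B_f : #|B| <= f.

Lemma client_ts_below s acks :
  (forall j k, j \notin B -> acks j = Some k -> assigned_below s k.+1) ->
  assigned_below s (client_ts acks).
Proof.
move=> acks_ok.
have lt_f_n : #|B| <= f < #|'I_(4 * f + 1)|.
  by rewrite le_B_f card_ord addn1 ltnS leq_pmull.
have [j jB] := nth_sort_geq_le_outside (fun j => odflt 0 (acks j)) lt_f_n.
rewrite /client_ts; case acks_j: (acks j) => [k|] /= le_x_k.
  by apply: assigned_below_le (acks_ok j k jB acks_j); rewrite ltnS.
by apply: assigned_below_le (assigned_below1 s); rewrite ltnS.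
Qed.

Lemma invariant_recv s src dst m s' :
  invariant s -> In (src, dst, m) (dlv s) -> recv B s src dst m s' -> invariant s'.
Proof.
move=> inv_s dlv_m recv_m.
have sound_m : sound_msg s (src, dst, m).
  by apply: (sent_sound inv_s); apply: in_or_app; right.
case: recv_m dlv_m sound_m => // {s'}.
- move=> c T j jB _ _; apply: invariant_send => // e /= [<- _ | /in_map_iff[k [<- _]]] //.
  exact: clk_sound.
- move=> src' c T t j jB _ dlv_m below_t.
  have below_t1 : assigned_below s t.+1.
    by apply: (assigned_below_succ (T := T) _ below_t); exists c, src', j.
  apply: (invariant_send (invariant_raise_clk _ _ _ _)) => // e.
  by case/in_map_iff=> k [<- _].
- move=> src' c T t j jB _ dlv_m below_t; apply: invariant_raise_clk => //.
  by apply: (assigned_below_succ (T := T) _ below_t); exists c, src', j.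
- move=> c T k j sent acks cph_cT _ _ k_ok; apply: invariant_upd_cph => // j' k' j'B.
  rewrite /upd_srv; case: eqP => [eq_j [<-] | _]; first by apply: k_ok; rewrite -eq_j.
  by move: (cph_sound inv_s c T); rewrite cph_cT; apply.
Qed.

Lemma invariant_step s s' : invariant s -> step B s s' -> invariant s'.
Proof.
move=> inv_s; case=> {s'}.
- move=> c T _; apply: (invariant_upd_cph (s := sign s (SigProp c T))) => //.
  exact: invariant_sign.
- move=> c T j sent acks cph_cT _.
  apply: (invariant_upd_cph
            (s := set_net s (net s ++ [:: (Cli f c, Srv Cl j, Propose c T)]))).
    by apply: invariant_send => // e [<- | []].
  by move: (cph_sound inv_s c T); rewrite cph_cT.
- move=> c T sent acks cph_cT _ _.
  have below_ts : assigned_below s (client_ts acks).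
    by apply: client_ts_below; move: (cph_sound inv_s c T); rewrite cph_cT.
  apply: (invariant_upd_cph (s := sign s (SigConf c T (client_ts acks)))) => //.
  exact: invariant_sign.
- move=> c T t j sent cph_cT _.
  have below_t : assigned_below s t by move: (cph_sound inv_s c T); rewrite cph_cT.
  apply: (invariant_upd_cph
            (s := set_net s (net s ++ [:: (Cli f c, Srv Cl j, Confirm c T t)]))) => //.
  by apply: invariant_send => // e [<- | []].
- move=> pre post src dst m s' net_s _ /invariant_recv; apply; last by left.
  exact: invariant_take.
- move=> j dst m jB signed_m; apply: invariant_send => // e [<- | []] /=.
  case: m signed_m => //= [T k _ | c T t /(sigs_sound inv_s) //].
  by rewrite jB.
Qed.

Lemma invariant_reachable s : reachable B s -> invariant s.
Proof.
elim=> [|s1 s2 _ inv_s1 step_s1]; first exact: invariant_init.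
exact: invariant_step step_s1.
Qed.

End Invariant.

Theorem lemma2 (f : nat) (Cl Tx : eqType) (B : {set 'I_(4 * f + 1)})
  (hB : #|B| <= f) (s : state f Cl Tx) (hs : reachable B s)
  (T : Tx) (t : nat) (hT : assigned B s T t) :
  forall t' : nat, 0 < t' < t -> exists T' : Tx, assigned B s T' t'.
Proof.
have [sent_ok _ _ _] := invariant_reachable hB hs.
case: hT => c [src [j [_ dlv_T]]].
by apply: (sent_ok (src, Srv Cl j, Confirm c T t)); apply: in_or_app; right.
Qed.
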